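(* Consider $n$ users with strictly concave, continuously differentiable utilities $u_i:\mathbb{R}_+\to\mathbb{R}$ and budgets $b_i>0$, served by a system operator with a strictly convex, coercive, continuously differentiable cost $C:\mathbb{R}_+\to\mathbb{R}$, and assume some user $i$ has $u_i'(0)>C'(0)$. Let $\hat u_i$ be the modified utility of user $i$ (defined in the context). Then the problem $$(\hat{\mathcal P})\quad \max_{x,y}\ \sum_{i=1}^n \hat u_i(x_i)-C(y)\quad\text{s.t. } x_i\ge 0\ \forall i,\quad \sum_{i=1}^n x_i=y$$ is a convex optimization problem whose unique optimal allocations $(\hat x^*,\hat y^* )$ and optimal dual variable $\hat\lambda^*$ (of the constraint $\sum_i x_i=y$) equal the budget-constrained equilibrium allocations and price: $\hat\lambda^*=\lambda^*$, $\hat x_i^*=x_i^*(\lambda^* )$ for all $i$, and $\hat y^*=y^*(\lambda^* )$.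
   Context: For $\lambda>0$: $x_i^*(\lambda)=\max\{0,\min\{(u_i')^{-1}(\lambda),\ b_i/\lambda\}\}$ (maximizer of $u_i(x)-\lambda x$ over $x\ge0$ with $\lambda x\le b_i$) and $y^*(\lambda)=(C')^{-1}(\lambda)$ (maximizer of $\lambda y-C(y)$ over $y\ge0$). The equilibrium price $\lambda^*$ is the unique $\lambda^*>0$ with $\sum_i x_i^*(\lambda^* )=y^*(\lambda^* )$; it is the limit of the dual-ascent iteration $\lambda^{k+1}=\lambda^k+\alpha^k(\sum_i x_i^*(\lambda^k)-y^*(\lambda^k))$. Modified utility: for a utility $u$ and budget $b>0$, let $0=\tilde x_0<\tilde x_1<\dots<\tilde x_k<\tilde x_{k+1}=\infty$, where $\tilde x_1,\dots,\tilde x_k$ are the (crossover) solutions $\tilde x>0$ of $u'(\tilde x)=b/\tilde x$. On each interval $(\tilde x_{j-1},\tilde x_j)$ either $u'(x)\le b/x$ throughout or $u'(x)>b/x$ throughout; define $\hat u(x)=u(x)+c_j$ on intervals of the first type and $\hat u(x)=b\log x+d_j$ on intervals of the second type, where the constants are chosen sequentially so that $\hat u$ is continuous, with $c_1=d_1=0$. Then $\hat u_i$ is this construction applied to $u_i,b_i$. *)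

From Stdlib Require Import Reals List.
From Coquelicot Require Import Coquelicot.
Open Scope R_scope.

Definition sumR (n : nat) (f : nat -> R) : R :=
  fold_right Rplus 0 (map f (seq 0 n)).

Definition C1_nonneg (f df : R -> R) : Prop :=
  (forall x, 0 < x -> is_derive f x (df x)) /\
  filterlim (fun h => (f h - f 0) / h) (at_right 0) (locally (df 0)) /\
  (forall x, 0 < x -> continuous df x) /\
  filterlim df (at_right 0) (locally (df 0)).

Definition concave_nonneg (f : R -> R) : Prop :=
  forall x y t, 0 <= x -> 0 <= y -> 0 <= t <= 1 ->
    t * f x + (1 - t) * f y <= f (t * x + (1 - t) * y).

Definition strictly_concave_nonneg (f : R -> R) : Prop :=
  forall x y t, 0 <= x -> 0 <= y -> x <> y -> 0 < t < 1 ->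
    t * f x + (1 - t) * f y < f (t * x + (1 - t) * y).

Definition strictly_convex_nonneg (f : R -> R) : Prop :=
  forall x y t, 0 <= x -> 0 <= y -> x <> y -> 0 < t < 1 ->
    f (t * x + (1 - t) * y) < t * f x + (1 - t) * f y.

Definition coercive_nonneg (f : R -> R) : Prop :=
  forall M, exists N, forall y, N <= y -> M <= f y.

Definition user_best_response (u : R -> R) (b lam x : R) : Prop :=
  0 <= x /\ lam * x <= b /\
  forall z, 0 <= z -> lam * z <= b -> u z - lam * z <= u x - lam * x.

Definition operator_best_response (C : R -> R) (lam y : R) : Prop :=
  0 <= y /\ forall z, 0 <= z -> lam * z - C z <= lam * y - C y.

Definition equilibrium (n : nat) (u : nat -> R -> R) (b : nat -> R)
  (C : R -> R) (lam : R) (xs : nat -> R) (ys : R) : Prop :=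
  0 < lam /\
  (forall i, (i < n)%nat -> user_best_response (u i) (b i) lam (xs i)) /\
  operator_best_response C lam ys /\
  sumR n xs = ys.

(* Modified utility (construction of the paper).
   s = list of crossover points 0 < x~_1 < ... < x~_k (all solutions x>0 of
   u'(x) = b/x); intervals I_j = (x~_{j-1}, x~_j), j = 0..k (0-based),
   with x~_0 = 0 and x~_{k+1} = +oo. *)
Definition interval_left (s : list R) (j : nat) : R :=
  match j with O => 0 | S j' => nth j' s 0 end.

Definition in_interval (s : list R) (j : nat) (x : R) : Prop :=
  interval_left s j < x /\ ((j < length s)%nat -> x < nth j s 0).

Definition modified_utility (u du : R -> R) (b : R) (uh : R -> R) : Prop :=
  exists s : list R,
    (forall j, (j < length s)%nat -> 0 < nth j s 0) /\
    (forall j, (S j < length s)%nat -> nth j s 0 < nth (S j) s 0) /\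
    (forall x, 0 < x -> (du x = b / x <-> In x s)) /\
    (forall j, (j <= length s)%nat ->
       exists c : R, (j = O -> c = 0) /\
         (((forall x, in_interval s j x -> du x <= b / x) /\
           (forall x, in_interval s j x -> uh x = u x + c))
          \/
          ((forall x, in_interval s j x -> du x > b / x) /\
           (forall x, in_interval s j x -> uh x = b * ln x + c)))) /\
    (* constants chosen so that uh is continuous (on [0,oo)) *)
    (forall x, 0 < x -> continuous uh x) /\
    filterlim uh (at_right 0) (locally (uh 0)).

Definition feasible (n : nat) (x : nat -> R) (y : R) : Prop :=
  (forall i, (i < n)%nat -> 0 <= x i) /\ sumR n x = y.

Definition objective (n : nat) (uh : nat -> R -> R) (C : R -> R)
  (x : nat -> R) (y : R) : R :=
  sumR n (fun i => uh i (x i)) - C y.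

Definition primal_optimal (n : nat) (uh : nat -> R -> R) (C : R -> R)
  (x : nat -> R) (y : R) : Prop :=
  feasible n x y /\
  forall x' y', feasible n x' y' -> objective n uh C x' y' <= objective n uh C x y.

Definition lagrangian (n : nat) (uh : nat -> R -> R) (C : R -> R)
  (lam : R) (x : nat -> R) (y : R) : R :=
  objective n uh C x y + lam * (y - sumR n x).

(* lam is an optimal dual variable for the constraint sum x_i = y:
   the dual function sup_{x>=0,y>=0} L(x,y,lam) does not exceed the
   optimal primal value (hence equals it by weak duality, and lam
   minimizes the dual function with zero duality gap). *)
Definition dual_optimal (n : nat) (uh : nat -> R -> R) (C : R -> R)
  (lam : R) : Prop :=
  exists x0 y0, primal_optimal n uh C x0 y0 /\
    forall x y, (forall i, (i < n)%nat -> 0 <= x i) -> 0 <= y ->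
      lagrangian n uh C lam x y <= objective n uh C x0 y0.

From Stdlib Require Import Reals List Lra Lia.
From Coquelicot Require Import Coquelicot.
Open Scope R_scope.

(* On (0, oo) the modified utility uh is differentiable off the crossover points, with
   derivative g x = min (u' x) (b / x): on a piece of the first kind it is u' <= b / x,
   on a piece of the second kind it is b / x < u'.  Since uh is continuous, every chord
   of uh over [p, q] has slope between g q and g p, and g is strictly decreasing, so uh
   is concave.  The first-order conditions of the budget-constrained user problem say
   that g (x_i(lam)) = lam when x_i(lam) > 0 and g 0 <= lam otherwise, hence x_i(lam)
   is the unique maximiser of uh_i x - lam x over x >= 0.  With y(lam) the unique
   maximiser of lam y - C y and market clearing, the equilibrium is a saddle point of
   the Lagrangian: this gives primal and dual optimality, and uniqueness of the
   allocation comes from the uniqueness of these maximisers.  Any optimal dual price l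
   makes y(lam) a maximiser of l y - C y as well, so l = C' (y(lam)) = lam, using
   y(lam) > 0, which holds because some user has u_i' 0 > C' 0. *)

Lemma filterlim_le_limits {T : Type} {F : (T -> Prop) -> Prop} {FF : ProperFilter F}
  (f g : T -> R) (l m : R) :
  F (fun x => f x <= g x) -> filterlim f F (locally l) -> filterlim g F (locally m) ->
  l <= m.
Proof. intros Hle Hf Hg. exact (filterlim_le f g l m Hle Hf Hg). Qed.

Lemma filterlim_affine (F : (R -> Prop) -> Prop) (a al be : R) :
  filter_le F (locally a) ->
  filterlim (fun x => al + be * x) F (locally (al + be * a)).
Proof.
  intros HF. apply (filterlim_filter_le_1 _ HF).
  apply (ex_derive_continuous (fun x => al + be * x)). auto_derive. trivial.
Qed.

Lemma at_right_of_interval (x d : R) (P : R -> Prop) :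
  0 < d -> (forall y, x < y < x + d -> P y) -> at_right x P.
Proof.
  intros Hd HP. exists (mkposreal d Hd). intros y Hy Hxy.
  change (Rabs (y - x) < d) in Hy. apply Rabs_def2 in Hy. apply HP. lra.
Qed.

Lemma at_left_of_interval (x d : R) (P : R -> Prop) :
  0 < d -> (forall y, x - d < y < x -> P y) -> at_left x P.
Proof.
  intros Hd HP. exists (mkposreal d Hd). intros y Hy Hxy.
  change (Rabs (y - x) < d) in Hy. apply Rabs_def2 in Hy. apply HP. lra.
Qed.

Lemma at_right_le_locally' (x : R) : filter_le (at_right x) (locally' x).
Proof. intros P [d Hd]. exists d. intros y Hy Hxy. apply Hd; [exact Hy | lra]. Qed.

Lemma at_left_le_locally' (x : R) : filter_le (at_left x) (locally' x).
Proof. intros P [d Hd]. exists d. intros y Hy Hxy. apply Hd; [exact Hy | lra]. Qed.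

Lemma is_derive_diff_quot (f : R -> R) (p l : R) : is_derive f p l ->
  filterlim (fun h => (f (p + h) - f p) / h) (locally' 0) (locally l).
Proof.
  intros Hd. apply is_derive_Reals in Hd. intros P [eps HP].
  destruct (Hd eps (cond_pos eps)) as [d Hd'].
  exists d. intros h Hh Hh0. apply HP.
  change (Rabs ((f (p + h) - f p) / h - l) < eps).
  change (Rabs (h - 0) < d) in Hh. rewrite Rminus_0_r in Hh.
  exact (Hd' h Hh0 Hh).
Qed.

Lemma C1_nonneg_right_diff_quot (f df : R -> R) (p : R) : C1_nonneg f df -> 0 <= p ->
  filterlim (fun h => (f (p + h) - f p) / h) (at_right 0) (locally (df p)).
Proof.
  intros [Hder [Hder0 _]] Hp. destruct (Req_dec p 0) as [-> | Hp0].
  - eapply filterlim_ext; [| exact Hder0]. intros h. simpl. now rewrite Rplus_0_l.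
  - apply (filterlim_filter_le_1 _ (at_right_le_locally' 0)).
    apply is_derive_diff_quot, Hder. lra.
Qed.

Lemma C1_nonneg_left_diff_quot (f df : R -> R) (p : R) : C1_nonneg f df -> 0 < p ->
  filterlim (fun h => (f (p + h) - f p) / h) (at_left 0) (locally (df p)).
Proof.
  intros [Hder _] Hp. apply (filterlim_filter_le_1 _ (at_left_le_locally' 0)).
  apply is_derive_diff_quot, Hder, Hp.
Qed.

Section OneSidedDerivativeBounds.

Variables (f : R -> R) (p l K d : R).
Hypothesis d_pos : 0 < d.

Lemma deriv_le_of_right_incr :
  filterlim (fun h => (f (p + h) - f p) / h) (at_right 0) (locally l) ->
  (forall h, 0 < h < d -> f (p + h) - f p <= K * h) -> l <= K.
Proof.
  intros Hl Hinc. apply (filterlim_le_limits (F := at_right 0) (fun h => (f (p + h) - f p) / h) (fun _ => K) l K); [| exact Hl | apply filterlim_const].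
  apply (at_right_of_interval 0 d); [exact d_pos |]. intros h Hh.
  apply Rle_div_l; [lra |]. apply Hinc. lra.
Qed.

Lemma deriv_ge_of_right_incr :
  filterlim (fun h => (f (p + h) - f p) / h) (at_right 0) (locally l) ->
  (forall h, 0 < h < d -> K * h <= f (p + h) - f p) -> K <= l.
Proof.
  intros Hl Hinc. apply (filterlim_le_limits (F := at_right 0) (fun _ => K) (fun h => (f (p + h) - f p) / h) K l); [| apply filterlim_const | exact Hl].
  apply (at_right_of_interval 0 d); [exact d_pos |]. intros h Hh.
  assert (E : f (p + h) - f p = (f (p + h) - f p) / h * h) by (field; lra).
  specialize (Hinc h ltac:(lra)). nra.
Qed.

Lemma deriv_ge_of_left_incr :
  filterlim (fun h => (f (p + h) - f p) / h) (at_left 0) (locally l) ->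
  (forall h, - d < h < 0 -> f (p + h) - f p <= K * h) -> K <= l.
Proof.
  intros Hl Hinc. apply (filterlim_le_limits (F := at_left 0) (fun _ => K) (fun h => (f (p + h) - f p) / h) K l); [| apply filterlim_const | exact Hl].
  apply (at_left_of_interval 0 d); [exact d_pos |]. intros h Hh.
  assert (E : f (p + h) - f p = (f (p + h) - f p) / h * h) by (field; lra).
  specialize (Hinc h ltac:(lra)). nra.
Qed.

Lemma deriv_le_of_left_incr :
  filterlim (fun h => (f (p + h) - f p) / h) (at_left 0) (locally l) ->
  (forall h, - d < h < 0 -> K * h <= f (p + h) - f p) -> l <= K.
Proof.
  intros Hl Hinc. apply (filterlim_le_limits (F := at_left 0) (fun h => (f (p + h) - f p) / h) (fun _ => K) l K); [| exact Hl | apply filterlim_const].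
  apply (at_left_of_interval 0 d); [exact d_pos |]. intros h Hh.
  assert (E : f (p + h) - f p = (f (p + h) - f p) / h * h) by (field; lra).
  specialize (Hinc h ltac:(lra)). nra.
Qed.

End OneSidedDerivativeBounds.

Lemma strictly_concave_three_point (u : R -> R) (p r q : R) : strictly_concave_nonneg u ->
  0 <= p -> p < r -> r < q -> (q - r) * u p + (r - p) * u q < (q - p) * u r.
Proof.
  intros Hu Hp Hpr Hrq. set (t := (q - r) / (q - p)).
  assert (Ht : 0 < t < 1).
  { unfold t. split; [apply Rdiv_lt_0_compat; lra |].
    apply Rlt_div_l; lra. }
  pose proof (Hu p q t Hp ltac:(lra) ltac:(lra) Ht) as Hconc.
  replace (t * p + (1 - t) * q) with r in Hconc by (unfold t; field; lra).
  replace (q - r) with (t * (q - p)) by (unfold t; field; lra).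
  replace (r - p) with ((1 - t) * (q - p)) by (unfold t; field; lra).
  nra.
Qed.

Definition chord_slope_between (f g : R -> R) (p q : R) : Prop :=
  g q * (q - p) <= f q - f p <= g p * (q - p).

Lemma strictly_concave_chord_slope (u du : R -> R) (p q : R) :
  strictly_concave_nonneg u -> C1_nonneg u du -> 0 <= p -> p < q ->
  chord_slope_between u du p q.
Proof.
  intros Hu Hdu Hp Hpq. set (k := (u q - u p) / (q - p)).
  assert (Hk : u q - u p = k * (q - p)) by (unfold k; field; lra).
  split.
  - assert (du q <= k); [| rewrite Hk; apply Rmult_le_compat_r; lra].
    apply (deriv_le_of_left_incr u q (du q) k (q - p)); [lra | |].
    + apply C1_nonneg_left_diff_quot; [exact Hdu | lra].
    + intros h Hh.
      pose proof (strictly_concave_three_point u p (q + h) q Hu Hp ltac:(lra) ltac:(lra)).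
      nra.
  - assert (k <= du p); [| rewrite Hk; apply Rmult_le_compat_r; lra].
    apply (deriv_ge_of_right_incr u p (du p) k (q - p)); [lra | |].
    + apply C1_nonneg_right_diff_quot; [exact Hdu | exact Hp].
    + intros h Hh.
      pose proof (strictly_concave_three_point u p (p + h) q Hu Hp ltac:(lra) ltac:(lra)).
      nra.
Qed.

Lemma strictly_concave_derivative_decr (u du : R -> R) (p q : R) :
  strictly_concave_nonneg u -> C1_nonneg u du -> 0 <= p -> p < q -> du q < du p.
Proof.
  intros Hu Hdu Hp Hpq. set (m := (p + q) / 2).
  destruct (strictly_concave_chord_slope u du p m Hu Hdu Hp ltac:(unfold m; lra)) as [_ Hpm].
  destruct (strictly_concave_chord_slope u du m q Hu Hdu ltac:(unfold m; lra) ltac:(unfold m; lra))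
    as [Hmq _].
  pose proof (strictly_concave_three_point u p m q Hu Hp ltac:(unfold m; lra) ltac:(unfold m; lra)).
  replace (q - m) with ((q - p) / 2) in * by (unfold m; field).
  replace (m - p) with ((q - p) / 2) in * by (unfold m; field).
  apply (Rmult_lt_reg_r ((q - p) / 2)); [lra |].
  assert (u q - u m < u m - u p); [nra | lra].
Qed.

Lemma ln_chord_slope (b p q : R) : 0 <= b -> 0 < p -> p < q ->
  chord_slope_between (fun x => b * ln x) (fun x => b / x) p q.
Proof.
  intros Hb Hp Hpq.
  assert (Hup : ln q - ln p <= (q - p) / p).
  { rewrite <- ln_div by lra.
    pose proof (exp_ineq1_le (ln (q / p))) as Hexp.
    rewrite exp_ln in Hexp by (apply Rdiv_lt_0_compat; lra).
    replace ((q - p) / p) with (q / p - 1) by (field; lra). lra. }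
  assert (Hlow : (q - p) / q <= ln q - ln p).
  { pose proof (exp_ineq1_le (ln (p / q))) as Hexp.
    rewrite exp_ln in Hexp by (apply Rdiv_lt_0_compat; lra).
    rewrite ln_div in Hexp by lra.
    replace ((q - p) / q) with (1 - p / q) by (field; lra). lra. }
  unfold chord_slope_between.
  replace (b / q * (q - p)) with (b * ((q - p) / q)) by (field; lra).
  replace (b / p * (q - p)) with (b * ((q - p) / p)) by (field; lra).
  split; rewrite <- Rmult_minus_distr_l; apply Rmult_le_compat_l; assumption.
Qed.

Lemma chord_slope_between_trans (f g : R -> R) (p r q : R) :
  p < r -> r < q -> g q <= g r -> g r <= g p ->
  chord_slope_between f g p r -> chord_slope_between f g r q -> chord_slope_between f g p q.
Proof. unfold chord_slope_between. intros. split; nra. Qed.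

Lemma chord_slope_at_left_end (f g : R -> R) (a q : R) :
  a < q -> filterlim f (at_right a) (locally (f a)) ->
  (forall x, a < x < q -> g x <= g a) ->
  (forall x, a < x < q -> chord_slope_between f g x q) -> chord_slope_between f g a q.
Proof.
  intros Haq Hf Hg Hin.
  assert (Hev : forall P : R -> Prop, (forall x, a < x < q -> P x) -> at_right a P).
  { intros P HP. apply (at_right_of_interval a (q - a)); [lra |]. intros. apply HP. lra. }
  assert (Hlin : forall al be,
    filterlim (fun x => al + be * x) (at_right a) (locally (al + be * a))).
  { intros. apply filterlim_affine, filter_le_within. }
  split.
  - assert (f a <= (f q - g q * q) + g q * a); [| lra].
    apply (filterlim_le_limits (F := at_right a) f (fun x => (f q - g q * q) + g q * x));
      [| exact Hf | apply Hlin].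
    apply Hev. intros x Hx. destruct (Hin x Hx). lra.
  - assert ((f q - g a * q) + g a * a <= f a); [| lra].
    apply (filterlim_le_limits (F := at_right a) (fun x => (f q - g a * q) + g a * x) f);
      [| apply Hlin | exact Hf].
    apply Hev. intros x Hx. destruct (Hin x Hx). specialize (Hg x Hx). nra.
Qed.

Lemma chord_slope_at_right_end (f g : R -> R) (p e : R) :
  p < e -> filterlim f (at_left e) (locally (f e)) ->
  (forall x, p < x < e -> g e <= g x) ->
  (forall x, p < x < e -> chord_slope_between f g p x) -> chord_slope_between f g p e.
Proof.
  intros Hpe Hf Hg Hin.
  assert (Hev : forall P : R -> Prop, (forall x, p < x < e -> P x) -> at_left e P).
  { intros P HP. apply (at_left_of_interval e (e - p)); [lra |]. intros. apply HP. lra. }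
  assert (Hlin : forall al be,
    filterlim (fun x => al + be * x) (at_left e) (locally (al + be * e))).
  { intros. apply filterlim_affine, filter_le_within. }
  split.
  - assert ((f p - g e * p) + g e * e <= f e); [| lra].
    apply (filterlim_le_limits (F := at_left e) (fun x => (f p - g e * p) + g e * x) f);
      [| apply Hlin | exact Hf].
    apply Hev. intros x Hx. destruct (Hin x Hx). specialize (Hg x Hx). nra.
  - assert (f e <= (f p - g p * p) + g p * e); [| lra].
    apply (filterlim_le_limits (F := at_left e) f (fun x => (f p - g p * p) + g p * x));
      [| exact Hf | apply Hlin].
    apply Hev. intros x Hx. destruct (Hin x Hx). lra.
Qed.

Lemma concave_of_chord_slope (f g : R -> R) :
  (forall p q, 0 <= p -> p < q -> chord_slope_between f g p q) -> concave_nonneg f.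
Proof.
  intros Hch.
  assert (Hlt : forall x y t, 0 <= x -> x < y -> 0 < t < 1 ->
            t * f x + (1 - t) * f y <= f (t * x + (1 - t) * y)).
  { intros x y t Hx Hxy Ht. set (m := t * x + (1 - t) * y).
    assert (x < m < y) by (unfold m; nra).
    destruct (Hch x m Hx ltac:(lra)) as [Hxm _].
    destruct (Hch m y ltac:(lra) ltac:(lra)) as [_ Hmy].
    assert (E : t * (m - x) = (1 - t) * (y - m)) by (unfold m; ring).
    assert (t * (g m * (m - x)) <= t * (f m - f x)) by (apply Rmult_le_compat_l; lra).
    assert ((1 - t) * (f y - f m) <= (1 - t) * (g m * (y - m))) by (apply Rmult_le_compat_l; lra).
    assert (t * (g m * (m - x)) = (1 - t) * (g m * (y - m))).
    { transitivity (g m * (t * (m - x))); [ring | rewrite E; ring]. }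
    lra. }
  intros x y t Hx Hy Ht.
  destruct (Req_dec t 0) as [-> | Ht0].
  { replace (0 * x + (1 - 0) * y) with y by ring. lra. }
  destruct (Req_dec t 1) as [-> | Ht1].
  { replace (1 * x + (1 - 1) * y) with x by ring. lra. }
  destruct (Rtotal_order x y) as [Hxy | [<- | Hxy]].
  - apply Hlt; lra.
  - replace (t * x + (1 - t) * x) with x by ring. lra.
  - pose proof (Hlt y x (1 - t) Hy Hxy ltac:(lra)) as H.
    replace (1 - (1 - t)) with t in H by ring.
    replace (t * x + (1 - t) * y) with ((1 - t) * y + t * x) by ring. lra.
Qed.

Lemma strict_chord_slope (f g : R -> R) (p q : R) :
  (forall p q, 0 <= p -> p < q -> g q < g p) ->
  (forall p q, 0 <= p -> p < q -> chord_slope_between f g p q) ->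
  0 <= p -> p < q -> g q * (q - p) < f q - f p < g p * (q - p).
Proof.
  intros Hdecr Hch Hp Hpq. set (m := (p + q) / 2).
  destruct (Hch p m Hp ltac:(unfold m; lra)) as [Hpm1 Hpm2].
  destruct (Hch m q ltac:(unfold m; lra) ltac:(unfold m; lra)) as [Hmq1 Hmq2].
  pose proof (Hdecr p m Hp ltac:(unfold m; lra)).
  pose proof (Hdecr m q ltac:(unfold m; lra) ltac:(unfold m; lra)).
  assert (0 < m - p) by (unfold m; lra). assert (0 < q - m) by (unfold m; lra).
  split; nra.
Qed.

Lemma strict_argmax_of_chord_slope (f g : R -> R) (lam x : R) :
  (forall p q, 0 <= p -> p < q -> g q * (q - p) < f q - f p < g p * (q - p)) ->
  0 <= x -> g x <= lam -> (0 < x -> lam <= g x) ->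
  forall z, 0 <= z -> z <> x -> f z - lam * z < f x - lam * x.
Proof.
  intros Hch Hx Hle Hge z Hz Hzx.
  destruct (Rtotal_order z x) as [Hlt | [Heq | Hgt]]; [| contradiction |].
  - destruct (Hch z x Hz Hlt) as [H _]. specialize (Hge ltac:(lra)). nra.
  - destruct (Hch x z Hx Hgt) as [_ H]. nra.
Qed.

(* [min (u' x) (b / x)] is the derivative of the modified utility on [(0, oo)];
   at [0] it is extended continuously by [u' 0]. *)
Definition modified_derivative (du : R -> R) (b x : R) : R :=
  if Rle_dec x 0 then du 0 else Rmin (du x) (b / x).

Lemma modified_derivative_pos (du : R -> R) (b x : R) :
  0 < x -> modified_derivative du b x = Rmin (du x) (b / x).
Proof. intros Hx. unfold modified_derivative. destruct (Rle_dec x 0); [lra | reflexivity]. Qed.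

Lemma modified_derivative_decr (u du : R -> R) (b p q : R) :
  strictly_concave_nonneg u -> C1_nonneg u du -> 0 < b -> 0 <= p -> p < q ->
  modified_derivative du b q < modified_derivative du b p.
Proof.
  intros Hu Hdu Hb Hp Hpq. rewrite (modified_derivative_pos du b q) by lra.
  pose proof (strictly_concave_derivative_decr u du p q Hu Hdu Hp Hpq).
  pose proof (Rmin_l (du q) (b / q)).
  destruct (Req_dec p 0) as [-> | Hp0].
  - unfold modified_derivative. destruct (Rle_dec 0 0); lra.
  - rewrite modified_derivative_pos by lra.
    assert (b / q < b / p) by (apply Rmult_lt_compat_l; [lra | apply Rinv_lt_contravar; nra]).
    pose proof (Rmin_r (du q) (b / q)).
    apply Rmin_glb_lt; lra.
Qed.

Section ModifiedUtilityPieces.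

Variables (u du uh : R -> R) (b : R) (s : list R).
Hypothesis u_concave : strictly_concave_nonneg u.
Hypothesis u_C1 : C1_nonneg u du.
Hypothesis b_pos : 0 < b.
Hypothesis s_pos : forall j, (j < length s)%nat -> 0 < nth j s 0.
Hypothesis uh_pieces : forall j, (j <= length s)%nat ->
  exists c : R, (j = O -> c = 0) /\
    (((forall x, in_interval s j x -> du x <= b / x) /\
      (forall x, in_interval s j x -> uh x = u x + c))
     \/
     ((forall x, in_interval s j x -> du x > b / x) /\
      (forall x, in_interval s j x -> uh x = b * ln x + c))).
Hypothesis uh_cont : forall x, 0 < x -> continuous uh x.
Hypothesis uh_cont0 : filterlim uh (at_right 0) (locally (uh 0)).

Let g := modified_derivative du b.

Lemma interval_left_nonneg j : (j <= length s)%nat -> 0 <= interval_left s j.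
Proof. intros Hj. destruct j as [| j]; simpl; [lra |]. left. apply s_pos. lia. Qed.

Lemma uh_right_cont a : 0 <= a -> filterlim uh (at_right a) (locally (uh a)).
Proof.
  intros Ha. destruct (Req_dec a 0) as [-> | Ha0]; [exact uh_cont0 |].
  apply (filterlim_filter_le_1 _ (filter_le_within _)). apply uh_cont. lra.
Qed.

Lemma uh_left_cont a : 0 < a -> filterlim uh (at_left a) (locally (uh a)).
Proof. intros Ha. apply (filterlim_filter_le_1 _ (filter_le_within _)), uh_cont, Ha. Qed.

Lemma g_nonincr p q : 0 <= p -> p < q -> g q <= g p.
Proof. intros. left. apply (modified_derivative_decr u); assumption. Qed.

Lemma chord_slope_piece_interior j p q : (j <= length s)%nat ->
  in_interval s j p -> in_interval s j q -> p < q -> chord_slope_between uh g p q.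
Proof.
  intros Hj Hp Hq Hpq.
  pose proof (interval_left_nonneg j Hj).
  assert (Hp0 : 0 < p) by (destruct Hp; lra).
  unfold g, chord_slope_between. rewrite !modified_derivative_pos by lra.
  destruct (uh_pieces j Hj) as [c [_ [[Hdu Huh] | [Hdu Huh]]]];
    rewrite (Huh p Hp), (Huh q Hq).
  - rewrite !Rmin_left by (apply Hdu; assumption).
    destruct (strictly_concave_chord_slope u du p q u_concave u_C1 ltac:(lra) Hpq). lra.
  - rewrite !Rmin_right by (left; apply Hdu; assumption).
    destruct (ln_chord_slope b p q ltac:(lra) Hp0 Hpq). lra.
Qed.

Lemma chord_slope_piece j p q : (j <= length s)%nat ->
  interval_left s j <= p -> p < q -> ((j < length s)%nat -> q <= nth j s 0) ->
  chord_slope_between uh g p q.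
Proof.
  intros Hj Hp Hpq Hq.
  pose proof (interval_left_nonneg j Hj).
  assert (Hopen : forall p q, interval_left s j <= p -> p < q ->
            ((j < length s)%nat -> q < nth j s 0) -> chord_slope_between uh g p q).
  { clear p q Hp Hpq Hq. intros p q Hp Hpq Hq.
    assert (Hin : forall x, interval_left s j < x <= q -> in_interval s j x).
    { intros x Hx. split; [lra |]. intros Hjs. specialize (Hq Hjs). lra. }
    destruct (Rle_lt_or_eq_dec _ _ Hp) as [Hlt | Ep].
    - apply (chord_slope_piece_interior j); [exact Hj | apply Hin; lra | apply Hin; lra | lra].
    - apply chord_slope_at_left_end; [lra | apply uh_right_cont; lra | |].
      + intros x Hx. apply g_nonincr; lra.
      + intros x Hx.
        apply (chord_slope_piece_interior j); [exact Hj | apply Hin; lra | apply Hin; lra | lra]. }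
  destruct (Nat.lt_ge_cases j (length s)) as [Hjs | Hjs].
  - destruct (Rle_lt_or_eq_dec _ _ (Hq Hjs)) as [Hlt | ->].
    + apply Hopen; auto.
    + apply chord_slope_at_right_end; [lra | apply uh_left_cont; lra | |].
      * intros x Hx. apply g_nonincr; lra.
      * intros x Hx. apply Hopen; lra.
  - apply Hopen; auto. intros. lia.
Qed.

Lemma chord_slope_up_to_piece j : (j <= length s)%nat ->
  forall p q, 0 <= p -> p < q -> ((j < length s)%nat -> q <= nth j s 0) ->
  chord_slope_between uh g p q.
Proof.
  induction j as [| j IH]; intros Hj p q Hp Hpq Hq.
  - apply (chord_slope_piece 0); [lia | simpl; lra | exact Hpq | exact Hq].
  - assert (Hr : 0 < nth j s 0) by (apply s_pos; lia).
    destruct (Rle_lt_dec q (nth j s 0)) as [Hqr | Hqr].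
    + apply IH; auto. lia.
    + destruct (Rle_lt_dec (nth j s 0) p) as [Hrp | Hrp].
      * apply (chord_slope_piece (S j)); auto.
      * apply (chord_slope_between_trans uh g p (nth j s 0) q);
          [lra | lra | apply g_nonincr; lra | apply g_nonincr; lra | |].
        -- apply IH; [lia | lra | lra | intros; lra].
        -- apply (chord_slope_piece (S j)); simpl; [lia | lra | lra | exact Hq].
Qed.

Lemma chord_slope_modified_pieces p q : 0 <= p -> p < q -> chord_slope_between uh g p q.
Proof. intros Hp Hpq. apply (chord_slope_up_to_piece (length s)); auto. lia. Qed.

End ModifiedUtilityPieces.

Lemma modified_utility_chord_slope (u du uh : R -> R) (b : R) :
  strictly_concave_nonneg u -> C1_nonneg u du -> 0 < b -> modified_utility u du b uh ->
  forall p q, 0 <= p -> p < q -> chord_slope_between uh (modified_derivative du b) p q.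
Proof.
  intros Hu Hdu Hb (s & Hpos & _ & _ & Hpieces & Hcont & Hcont0).
  exact (chord_slope_modified_pieces u du uh b s Hu Hdu Hb Hpos Hpieces Hcont Hcont0).
Qed.

Lemma modified_utility_concave (u du uh : R -> R) (b : R) :
  strictly_concave_nonneg u -> C1_nonneg u du -> 0 < b -> modified_utility u du b uh ->
  concave_nonneg uh.
Proof.
  intros Hu Hdu Hb Hmod.
  apply (concave_of_chord_slope uh (modified_derivative du b)).
  exact (modified_utility_chord_slope u du uh b Hu Hdu Hb Hmod).
Qed.

Lemma modified_derivative_le_price (u du : R -> R) (b lam x : R) :
  C1_nonneg u du -> 0 < b -> 0 < lam -> user_best_response u b lam x ->
  modified_derivative du b x <= lam.
Proof.
  intros Hdu Hb Hlam (Hx & Hbudget & Hbest).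
  destruct (Rle_lt_or_eq_dec _ _ Hx) as [Hxpos | <-].
  - rewrite modified_derivative_pos by exact Hxpos.
    destruct (Rlt_le_dec (lam * x) b) as [Hslack | Htight].
    + apply (Rle_trans _ (du x)); [apply Rmin_l |].
      apply (deriv_le_of_right_incr u x (du x) lam ((b - lam * x) / lam)).
      * apply Rdiv_lt_0_compat; lra.
      * apply C1_nonneg_right_diff_quot; [exact Hdu | lra].
      * intros h [Hh0 Hh]. apply Rlt_div_r in Hh; [| lra].
        pose proof (Hbest (x + h) ltac:(lra) ltac:(nra)). lra.
    + apply (Rle_trans _ (b / x)); [apply Rmin_r |].
      apply Rle_div_l; lra.
  - unfold modified_derivative. destruct (Rle_dec 0 0) as [_ | ]; [| lra].
    apply (deriv_le_of_right_incr u 0 (du 0) lam (b / lam)).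
    + apply Rdiv_lt_0_compat; lra.
    + apply C1_nonneg_right_diff_quot; [exact Hdu | lra].
    + intros h [Hh0 Hh]. rewrite Rplus_0_l. apply Rlt_div_r in Hh; [| lra].
      pose proof (Hbest h ltac:(lra) ltac:(nra)). lra.
Qed.

Lemma price_le_modified_derivative (u du : R -> R) (b lam x : R) :
  C1_nonneg u du -> 0 < lam -> user_best_response u b lam x -> 0 < x ->
  lam <= modified_derivative du b x.
Proof.
  intros Hdu Hlam (_ & Hbudget & Hbest) Hx.
  rewrite modified_derivative_pos by exact Hx. apply Rmin_glb.
  - apply (deriv_ge_of_left_incr u x (du x) lam x); [exact Hx | |].
    + apply C1_nonneg_left_diff_quot; assumption.
    + intros h Hh. pose proof (Hbest (x + h) ltac:(lra) ltac:(nra)). lra.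
  - apply Rle_div_r; lra.
Qed.

Lemma modified_utility_strict_argmax (u du uh : R -> R) (b lam x : R) :
  strictly_concave_nonneg u -> C1_nonneg u du -> 0 < b -> modified_utility u du b uh ->
  0 < lam -> user_best_response u b lam x ->
  forall z, 0 <= z -> z <> x -> uh z - lam * z < uh x - lam * x.
Proof.
  intros Hu Hdu Hb Hmod Hlam Hbr.
  apply (strict_argmax_of_chord_slope uh (modified_derivative du b)).
  - intros p q Hp Hpq. apply strict_chord_slope; [| | exact Hp | exact Hpq].
    + intros p' q'. apply (modified_derivative_decr u); assumption.
    + exact (modified_utility_chord_slope u du uh b Hu Hdu Hb Hmod).
  - apply Hbr.
  - exact (modified_derivative_le_price u du b lam x Hdu Hb Hlam Hbr).
  - exact (price_le_modified_derivative u du b lam x Hdu Hlam Hbr).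
Qed.

Lemma price_le_marginal_cost (C dC : R -> R) (mu y : R) :
  C1_nonneg C dC -> operator_best_response C mu y -> mu <= dC y.
Proof.
  intros HC (Hy & Hbest).
  apply (deriv_ge_of_right_incr C y (dC y) mu 1); [lra | |].
  - apply C1_nonneg_right_diff_quot; assumption.
  - intros h Hh. pose proof (Hbest (y + h) ltac:(lra)). lra.
Qed.

Lemma marginal_cost_le_price (C dC : R -> R) (mu y : R) :
  C1_nonneg C dC -> operator_best_response C mu y -> 0 < y -> dC y <= mu.
Proof.
  intros HC (_ & Hbest) Hy.
  apply (deriv_le_of_left_incr C y (dC y) mu y); [exact Hy | |].
  - apply C1_nonneg_left_diff_quot; assumption.
  - intros h Hh. pose proof (Hbest (y + h) ltac:(lra)). lra.
Qed.

Lemma operator_best_response_unique (C : R -> R) (mu y y' : R) :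
  strictly_convex_nonneg C -> operator_best_response C mu y -> 0 <= y' ->
  mu * y' - C y' = mu * y - C y -> y' = y.
Proof.
  intros Hconv (Hy & Hbest) Hy' Heq.
  destruct (Req_dec y' y) as [| Hne]; [assumption | exfalso].
  pose proof (Hconv y' y (1 / 2) Hy' Hy Hne ltac:(lra)).
  pose proof (Hbest (1 / 2 * y' + (1 - 1 / 2) * y) ltac:(lra)). nra.
Qed.

Lemma sumR_S (n : nat) (f : nat -> R) : sumR (S n) f = sumR n f + f n.
Proof.
  unfold sumR. rewrite seq_S, map_app, fold_right_app. simpl.
  induction (map f (seq 0 n)) as [| a l IH]; simpl; [| rewrite IH]; ring.
Qed.

Lemma sumR_le (n : nat) (f g : nat -> R) :
  (forall i, (i < n)%nat -> f i <= g i) -> sumR n f <= sumR n g.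
Proof.
  induction n as [| n IH]; intros Hle; [unfold sumR; simpl; lra |].
  rewrite !sumR_S. pose proof (Hle n ltac:(lia)).
  assert (sumR n f <= sumR n g) by (apply IH; intros; apply Hle; lia). lra.
Qed.

Lemma sumR_le_eq (n : nat) (f g : nat -> R) :
  (forall i, (i < n)%nat -> f i <= g i) -> sumR n f = sumR n g ->
  forall i, (i < n)%nat -> f i = g i.
Proof.
  induction n as [| n IH]; intros Hle Heq i Hi; [lia |].
  rewrite !sumR_S in Heq. pose proof (Hle n ltac:(lia)).
  assert (sumR n f <= sumR n g) by (apply sumR_le; intros; apply Hle; lia).
  destruct (Nat.eq_dec i n) as [-> | Hin]; [lra |].
  apply IH; [intros; apply Hle; lia | lra | lia].
Qed.

Lemma sumR_nonneg (n : nat) (x : nat -> R) :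
  (forall i, (i < n)%nat -> 0 <= x i) -> 0 <= sumR n x.
Proof.
  induction n as [| n IH]; intros Hx; [unfold sumR; simpl; lra |].
  rewrite sumR_S. pose proof (Hx n ltac:(lia)).
  assert (0 <= sumR n x) by (apply IH; intros; apply Hx; lia). lra.
Qed.

Lemma sumR_eq0_nonneg (n : nat) (x : nat -> R) :
  (forall i, (i < n)%nat -> 0 <= x i) -> sumR n x = 0 -> forall i, (i < n)%nat -> x i = 0.
Proof.
  induction n as [| n IH]; intros Hx Hsum i Hi; [lia |].
  rewrite sumR_S in Hsum. pose proof (Hx n ltac:(lia)).
  assert (0 <= sumR n x) by (apply sumR_nonneg; intros; apply Hx; lia).
  destruct (Nat.eq_dec i n) as [-> | Hin]; [lra |].
  apply IH; [intros; apply Hx; lia | lra | lia].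
Qed.

Lemma lagrangian_split (n : nat) (uh : nat -> R -> R) (C : R -> R) (lam : R)
  (x : nat -> R) (y : R) :
  lagrangian n uh C lam x y = sumR n (fun i => uh i (x i) - lam * x i) + (lam * y - C y).
Proof.
  unfold lagrangian, objective.
  induction n as [| n IH]; [unfold sumR; simpl; ring |].
  rewrite !sumR_S. lra.
Qed.

Section Saddle.

Variables (n : nat) (uh : nat -> R -> R) (C : R -> R) (lam : R) (xs : nat -> R) (ys : R).
Hypothesis users_argmax : forall i, (i < n)%nat ->
  forall z, 0 <= z -> z <> xs i -> uh i z - lam * z < uh i (xs i) - lam * xs i.
Hypothesis xs_nonneg : forall i, (i < n)%nat -> 0 <= xs i.
Hypothesis operator_best : operator_best_response C lam ys.
Hypothesis market_clears : sumR n xs = ys.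

Lemma users_argmax_le i : (i < n)%nat ->
  forall z, 0 <= z -> uh i z - lam * z <= uh i (xs i) - lam * xs i.
Proof.
  intros Hi z Hz. destruct (Req_dec z (xs i)) as [-> | Hne]; [lra |].
  left. apply users_argmax; assumption.
Qed.

Lemma lagrangian_le_equilibrium_value x y :
  (forall i, (i < n)%nat -> 0 <= x i) -> 0 <= y ->
  lagrangian n uh C lam x y <= objective n uh C xs ys.
Proof.
  intros Hx Hy.
  replace (objective n uh C xs ys) with (lagrangian n uh C lam xs ys)
    by (unfold lagrangian; rewrite market_clears; ring).
  rewrite !lagrangian_split.
  pose proof (proj2 operator_best y Hy).
  assert (sumR n (fun i => uh i (x i) - lam * x i)
          <= sumR n (fun i => uh i (xs i) - lam * xs i))
    by (apply sumR_le; intros i Hi; apply users_argmax_le; auto).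
  lra.
Qed.

Lemma objective_eq_lagrangian x y : feasible n x y ->
  objective n uh C x y = lagrangian n uh C lam x y.
Proof. intros [_ Hsum]. unfold lagrangian. rewrite Hsum. ring. Qed.

Lemma equilibrium_primal_optimal : primal_optimal n uh C xs ys.
Proof.
  split; [split; assumption |]. intros x y Hfeas.
  rewrite (objective_eq_lagrangian x y Hfeas).
  destruct Hfeas as [Hx Hsum].
  apply lagrangian_le_equilibrium_value; [exact Hx |].
  rewrite <- Hsum. apply sumR_nonneg, Hx.
Qed.

Lemma equilibrium_dual_optimal : dual_optimal n uh C lam.
Proof.
  exists xs, ys. split; [exact equilibrium_primal_optimal |].
  exact lagrangian_le_equilibrium_value.
Qed.

Lemma primal_optimal_unique : strictly_convex_nonneg C ->
  forall x y, primal_optimal n uh C x y -> (forall i, (i < n)%nat -> x i = xs i) /\ y = ys.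
Proof.
  intros Hconv x y [Hfeas Hopt].
  pose proof (Hopt xs ys (conj xs_nonneg market_clears)) as Hge.
  pose proof (proj2 equilibrium_primal_optimal x y Hfeas) as Hle.
  rewrite (objective_eq_lagrangian x y Hfeas), lagrangian_split in Hge, Hle.
  rewrite (objective_eq_lagrangian xs ys (conj xs_nonneg market_clears)),
    lagrangian_split in Hge, Hle.
  destruct Hfeas as [Hx Hsum].
  assert (Hy : 0 <= y) by (rewrite <- Hsum; apply sumR_nonneg, Hx).
  pose proof (proj2 operator_best y Hy).
  assert (Husers : sumR n (fun i => uh i (x i) - lam * x i)
                   <= sumR n (fun i => uh i (xs i) - lam * xs i))
    by (apply sumR_le; intros i Hi; apply users_argmax_le; auto).
  split.
  - intros i Hi.
    destruct (Req_dec (x i) (xs i)) as [| Hne]; [assumption | exfalso].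
    pose proof (sumR_le_eq n _ _ (fun i Hi => users_argmax_le i Hi (x i) (Hx i Hi))
                  ltac:(lra) i Hi).
    pose proof (users_argmax i Hi (x i) (Hx i Hi) Hne). lra.
  - apply (operator_best_response_unique C lam ys y Hconv operator_best Hy). lra.
Qed.

Lemma dual_optimal_unique (dC : R -> R) : C1_nonneg C dC -> 0 < ys ->
  forall l, dual_optimal n uh C l -> l = lam.
Proof.
  intros HC Hys l (x0 & y0 & Hopt0 & Hdual).
  assert (Hbr : operator_best_response C l ys).
  { split; [lra |]. intros y Hy.
    pose proof (Hdual xs y xs_nonneg Hy) as Hlag.
    pose proof (proj2 equilibrium_primal_optimal x0 y0 (proj1 Hopt0)) as Hobj.
    unfold lagrangian, objective in Hlag, Hobj. rewrite market_clears in Hlag. lra. }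
  pose proof (price_le_marginal_cost C dC l ys HC Hbr).
  pose proof (marginal_cost_le_price C dC l ys HC Hbr Hys).
  pose proof (price_le_marginal_cost C dC lam ys HC operator_best).
  pose proof (marginal_cost_le_price C dC lam ys HC operator_best Hys).
  lra.
Qed.

End Saddle.

Lemma equilibrium_supply_pos (n : nat) (u du : nat -> R -> R) (b : nat -> R)
  (C dC : R -> R) (lam : R) (xs : nat -> R) (ys : R) :
  (forall i, (i < n)%nat -> C1_nonneg (u i) (du i)) -> (forall i, (i < n)%nat -> 0 < b i) ->
  C1_nonneg C dC -> (exists i, (i < n)%nat /\ dC 0 < du i 0) ->
  equilibrium n u b C lam xs ys -> 0 < ys.
Proof.
  intros Hdu Hb HC (i & Hi & Hmarg) (Hlam & Hbr & Hop & Hsum).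
  destruct (Rle_lt_or_eq_dec _ _ (proj1 Hop)) as [| Hys0]; [assumption | exfalso].
  assert (Hxi : xs i = 0).
  { apply (sumR_eq0_nonneg n xs); [intros j Hj; apply (Hbr j Hj) | congruence | exact Hi]. }
  pose proof (modified_derivative_le_price (u i) (du i) (b i) lam (xs i)
                (Hdu i Hi) (Hb i Hi) Hlam (Hbr i Hi)) as Huser.
  rewrite Hxi in Huser. unfold modified_derivative in Huser.
  destruct (Rle_dec 0 0); [| lra].
  pose proof (price_le_marginal_cost C dC lam ys HC Hop). rewrite <- Hys0 in *. lra.
Qed.

Theorem theorem2 (n : nat) (u du : nat -> R -> R) (b : nat -> R)
  (C dC : R -> R) (uh : nat -> R -> R) (lam : R) (xs : nat -> R) (ys : R) :
  (forall i, (i < n)%nat -> strictly_concave_nonneg (u i)) ->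
  (forall i, (i < n)%nat -> C1_nonneg (u i) (du i)) ->
  (forall i, (i < n)%nat -> 0 < b i) ->
  strictly_convex_nonneg C -> coercive_nonneg C -> C1_nonneg C dC ->
  (exists i, (i < n)%nat /\ dC 0 < du i 0) ->
  (forall i, (i < n)%nat -> modified_utility (u i) (du i) (b i) (uh i)) ->
  equilibrium n u b C lam xs ys ->
  (forall i, (i < n)%nat -> concave_nonneg (uh i)) /\
  primal_optimal n uh C xs ys /\
  (forall x y, primal_optimal n uh C x y ->
     (forall i, (i < n)%nat -> x i = xs i) /\ y = ys) /\
  dual_optimal n uh C lam /\
  (forall l, dual_optimal n uh C l -> l = lam).
Proof.
  (* Coercivity of [C] only serves the existence of an equilibrium, which is given here. *)
  intros Hu Hdu Hb Hconv _ HC Hmarg Hmod Heq.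
  pose proof (equilibrium_supply_pos n u du b C dC lam xs ys Hdu Hb HC Hmarg Heq) as Hys.
  destruct Heq as (Hlam & Hbr & Hop & Hsum).
  assert (Hargmax : forall i, (i < n)%nat -> forall z, 0 <= z -> z <> xs i ->
            uh i z - lam * z < uh i (xs i) - lam * xs i).
  { intros i Hi. exact (modified_utility_strict_argmax (u i) (du i) (uh i) (b i) lam (xs i)
                          (Hu i Hi) (Hdu i Hi) (Hb i Hi) (Hmod i Hi) Hlam (Hbr i Hi)). }
  assert (Hxs : forall i, (i < n)%nat -> 0 <= xs i) by (intros i Hi; apply (Hbr i Hi)).
  split; [| split; [| split; [| split]]].
  - intros i Hi. exact (modified_utility_concave _ _ _ _ (Hu i Hi) (Hdu i Hi) (Hb i Hi) (Hmod i Hi)).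
  - exact (equilibrium_primal_optimal n uh C lam xs ys Hargmax Hxs Hop Hsum).
  - exact (primal_optimal_unique n uh C lam xs ys Hargmax Hxs Hop Hsum Hconv).
  - exact (equilibrium_dual_optimal n uh C lam xs ys Hargmax Hxs Hop Hsum).
  - exact (dual_optimal_unique n uh C lam xs ys Hargmax Hxs Hop Hsum dC HC Hys).
Qed.
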